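(* Let $\mathcal{S}$ be a discrete state space, $\mathcal{A}$ a finite action space, $\mathcal{R}=[-1,1]^{\mathcal{S}\times\mathcal{A}}$, $\Pi$ the set of functions $\mathcal{S}\to\mathcal{A}$, $\mathcal{P}$ the set of planners $p:\mathcal{R}\to\Pi$, and let $\dot\pi\in\Pi$. Let $L$ be a computer language (universal Turing machine) with Kolmogorov complexity $K_L$, let $c\ge0$, and suppose $L$ is $c$-reasonable for $F$, i.e. $$\max_{(p,R)\in\mathcal{P}\times\mathcal{R},\ F_i\in F}\big(K_L(F_i(p,R))-K_L(p,R)\big)\le c.$$ If $(\dot p,\dot R)\in\mathcal{P}\times\mathcal{R}$ is compatible with $\dot\pi$ (i.e.\ $\dot p(\dot R)=\dot\pi$), then $(-\dot p,-\dot R)$ is of comparable complexity to $(\dot p,\dot R)$, i.e. $$\big|K_L(-\dot p,-\dot R)-K_L(\dot p,\dot R)\big|\le c.$$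
   Context: $K_L(x)$ denotes the length of the shortest program in $L$ that generates (a description of) the object $x$. For a planner $p$, $-p$ is the planner $(-p)(R)=p(-R)$; $-R$ is the pointwise negative of $R$. Notation: $0$ is the zero reward; $p_\pi(R)=\pi$ for all $R$; $R_\pi(s,a)=1$ if $\pi(s)=a$ and $0$ otherwise; $p_g(R)(s)=\arg\max_a R(s,a)$. Basic operations: $f_1(p)=(p,0)$; $f_2(R)=(p_g,R)$; $f_3(p,R)=p(R)$; $f_4(p,R)=(-p,-R)$; $f_5(\pi)=p_\pi$; $f_6(\pi)=R_\pi$. The set $F=\{F_1,F_2,F_3,F_4\}$ consists of $F_1=f_1\circ f_5\circ f_3$, $F_2=f_2\circ f_6\circ f_3$, $F_3=f_4\circ f_2\circ f_6\circ f_3$, $F_4=f_4$. *)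

From HB Require Import structures.
From mathcomp Require Import all_boot all_order all_algebra.
From mathcomp Require Import boolp reals.
From mathcomp Require Import lra.
Set Implicit Arguments. Unset Strict Implicit. Unset Printing Implicit Defensive.
Import Order.TTheory GRing.Theory Num.Theory.
Local Open Scope ring_scope.

Section IRL.
Context (R : realType) (S : Type) (A : finType).

Record reward := Reward {
  rfun :> S -> A -> R;
  rfun_bounded : forall s a, -1 <= rfun s a <= 1 }.

Definition policy := S -> A.
Definition planner := reward -> policy.

Lemma neg_reward_bounded (r : reward) : forall s a, -1 <= - r s a <= 1.
Proof.
move=> s a; have /andP[h1 h2] := rfun_bounded r s a.
by rewrite lerNl opprK h2 /= lerNl.
Qed.

Definition neg_reward (r : reward) : reward := Reward (neg_reward_bounded r).

Definition neg_planner (p : planner) : planner := fun r => p (neg_reward r).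

Lemma zero_reward_bounded : forall (s : S) (a : A), -1 <= (0 : R) <= 1.
Proof. by move=> s a; apply/andP; split; lra. Qed.
Definition zero_reward : reward := Reward zero_reward_bounded.

Definition const_planner (pi : policy) : planner := fun _ => pi.

Lemma ind_reward_bounded (pi : policy) :
  forall s a, -1 <= (if pi s == a then 1 else 0 : R) <= 1.
Proof.
move=> s a; case: (pi s == a); apply/andP; split; lra.
Qed.
Definition ind_reward (pi : policy) : reward := Reward (ind_reward_bounded pi).

Definition greedy_planner (a0 : A) : planner :=
  fun r s => [arg max_(a > a0) (r s a : R)]%O.

Definition f1 (p : planner) : planner * reward := (p, zero_reward).
Definition f2 (a0 : A) (r : reward) : planner * reward := (greedy_planner a0, r).
Definition f3 (pr : planner * reward) : policy := pr.1 pr.2.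
Definition f4 (pr : planner * reward) : planner * reward :=
  (neg_planner pr.1, neg_reward pr.2).
Definition f5 (pi : policy) : planner := const_planner pi.
Definition f6 (pi : policy) : reward := ind_reward pi.

Definition F1 (pr : planner * reward) := f1 (f5 (f3 pr)).
Definition F2 (a0 : A) (pr : planner * reward) := f2 a0 (f6 (f3 pr)).
Definition F3 (a0 : A) (pr : planner * reward) := f4 (f2 a0 (f6 (f3 pr))).
Definition F4 (pr : planner * reward) := f4 pr.

Definition Fset (a0 : A) : seq (planner * reward -> planner * reward) :=
  [:: F1; F2 a0; F3 a0; F4].

Definition language := seq bool -> option (planner * reward).

Definition Kle (L : language) (x : planner * reward) (n : nat) : Prop :=
  exists prog, L prog = Some x /\ (size prog <= n)%N.

(* Kolmogorov complexity K_L(x): length of the shortest program generating x;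
   None encodes +infinity (no program generates x). *)
Definition Kolm (L : language) (x : planner * reward) : option nat :=
  match pselect (exists n, `[< Kle L x n >]) with
  | left h => Some (ex_minn h)
  | right _ => None
  end.

(* "k1 - k2 <= c" in extended naturals (None = +oo); with the convention that
   anything minus +oo is <= c, and +oo minus a finite value is not. *)
Definition ediff_le (k1 k2 : option nat) (c : R) : Prop :=
  match k1, k2 with
  | _, None => True
  | None, Some _ => False
  | Some a, Some b => (a%:R : R) <= b%:R + c
  end.

Definition c_reasonable (a0 : A) (L : language) (c : R) : Prop :=
  forall (i : 'I_4) (p : planner) (r : reward),
    ediff_le (Kolm L (nth F1 (Fset a0) i (p, r))) (Kolm L (p, r)) c.

End IRL.

From HB Require Import structures.
From mathcomp Require Import all_boot all_order all_algebra.
From mathcomp Require Import boolp reals.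
Import Order.TTheory GRing.Theory Num.Theory.
Set Implicit Arguments. Unset Strict Implicit.
Local Open Scope ring_scope.

(* Negating a planner-reward pair is the operation F4 of F, and it is an
   involution.  Reasonability for F4 at (p, R) bounds K(-p, -R) - K(p, R);
   at (-p, -R) it bounds K(p, R) - K(-p, -R). *)

Section Negation.
Variables (R : realType) (S : Type) (A : finType).

Lemma reward_ext (r1 r2 : reward R S A) :
  (forall s a, r1 s a = r2 s a) -> r1 = r2.
Proof.
case: r1 r2 => [f hf] [g hg] /= efg.
have /funext e : forall s, f s = g s by move=> s; apply/funext => a; apply: efg.
by subst g; rewrite (Prop_irrelevance hf hg).
Qed.

Lemma neg_rewardK : involutive (@neg_reward R S A).
Proof. by move=> r; apply: reward_ext => s a /=; rewrite opprK. Qed.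

Lemma neg_plannerK : involutive (@neg_planner R S A).
Proof. by move=> p; apply/funext => r; rewrite /neg_planner neg_rewardK. Qed.

Lemma f4K : involutive (@f4 R S A).
Proof. by case=> p r; rewrite /f4 /= neg_plannerK neg_rewardK. Qed.

Lemma c_reasonable_f4 (a0 : A) (L : language R S A) (c : R) :
  c_reasonable a0 L c -> forall x, ediff_le (Kolm L (f4 x)) (Kolm L x) c.
Proof. by move=> hL [p r]; exact: (hL (@Ordinal 4 3 isT) p r). Qed.

End Negation.

Theorem proposition4 (R : realType) (S : Type) (A : finType) (a0 : A)
  (pidot : policy S A) (L : language R S A) (c : R) (hc : 0 <= c)
  (hL : c_reasonable a0 L c)
  (pdot : planner R S A) (Rdot : reward R S A) (hcompat : pdot Rdot = pidot) :
  ediff_le (Kolm L (neg_planner pdot, neg_reward Rdot)) (Kolm L (pdot, Rdot)) c /\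
  ediff_le (Kolm L (pdot, Rdot)) (Kolm L (neg_planner pdot, neg_reward Rdot)) c.
Proof.
have hF4 := c_reasonable_f4 hL.
split; first exact: (hF4 (pdot, Rdot)).
by have := hF4 (f4 (pdot, Rdot)); rewrite f4K.
Qed.
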